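(* Let $u$ be a 5-complex number with $\rho_1>0$ (so $\theta_+\in(0,\pi)$ and $\psi_1\in(0,\pi/2]$). Then $$u=d\left(\frac52\right)^{1/2}\left(\cot^2\theta_++1+\cot^2\psi_1\right)^{-1/2}\left(\sqrt2\,e_+\cot\theta_++e_1+e_2\cot\psi_1\right)\exp\left(\tilde e_1\phi_1+\tilde e_2\phi_2\right),$$ where $\exp w=\sum_{n\ge0}w^n/n!$.
   Context: A 5-complex number is $u=x_0+h_1x_1+h_2x_2+h_3x_3+h_4x_4$ with real $x_j$, with componentwise addition and the commutative associative bilinear multiplication determined by $h_jh_k=h_{(j+k)\bmod 5}$, $h_0=1$. Modulus $d=(\sum_jx_j^2)^{1/2}$. Canonical variables: $v_+=\sum_jx_j$ and, for $k=1,2$, $v_k=\sum_jx_j\cos(2\pi kj/5)$, $\tilde v_k=\sum_jx_j\sin(2\pi kj/5)$. For $k=1,2$: $\rho_k=(v_k^2+\tilde v_k^2)^{1/2}$, $\phi_k\in[0,2\pi)$ with $\cos\phi_k=v_k/\rho_k$, $\sin\phi_k=\tilde v_k/\rho_k$. Planar angle $\psi_1\in[0,\pi/2]$: $\tan\psi_1=\rho_1/\rho_2$. Polar angle $\theta_+\in[0,\pi]$: $\tan\theta_+=\sqrt2\rho_1/v_+$. Canonical basis (with $h_0=1$): $e_+=\frac15\sum_{j=0}^4h_j$, and for $k=1,2$: $e_k=\frac25\sum_{j=0}^4\cos(2\pi kj/5)h_j$, $\tilde e_k=\frac25\sum_{j=0}^4\sin(2\pi kj/5)h_j$. Here $\cot$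 denotes $1/\tan$, with $\cot(\pi/2)=0$. *)

From Stdlib Require Import Reals Lra.
From Coquelicot Require Import Coquelicot.
Open Scope R_scope.

(* A 5-complex number u = x0 + h1 x1 + h2 x2 + h3 x3 + h4 x4. *)
Record C5 := mkC5 { c0 : R; c1 : R; c2 : R; c3 : R; c4 : R }.

(* j-th real component (j in 0..4; indices >= 4 default to x4, only j < 5 used). *)
Definition coef (u : C5) (j : nat) : R :=
  match j with 0 => c0 u | 1 => c1 u | 2 => c2 u | 3 => c3 u | _ => c4 u end.

Definition of_fun (f : nat -> R) : C5 := mkC5 (f 0%nat) (f 1%nat) (f 2%nat) (f 3%nat) (f 4%nat).

Definition c5add (u v : C5) : C5 := of_fun (fun j => coef u j + coef v j).
Definition c5scal (a : R) (u : C5) : C5 := of_fun (fun j => a * coef u j).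

(* Multiplication from h_j h_k = h_{(j+k) mod 5}: cyclic convolution. *)
Definition c5mul (u v : C5) : C5 :=
  of_fun (fun k => sum_f_R0 (fun j => coef u j * coef v ((k + 5 - j) mod 5)) 4).

Definition c5one : C5 := mkC5 1 0 0 0 0.

Fixpoint c5pow (w : C5) (n : nat) : C5 :=
  match n with O => c5one | S m => c5mul w (c5pow w m) end.

Definition c5exp (w : C5) : C5 :=
  of_fun (fun j => Series (fun n => coef (c5pow w n) j / INR (Factorial.fact n))).

Definition modulus (u : C5) : R := sqrt (sum_f_R0 (fun j => coef u j ^ 2) 4).
Definition vplus (u : C5) : R := sum_f_R0 (fun j => coef u j) 4.
Definition vk (k : nat) (u : C5) : R :=
  sum_f_R0 (fun j => coef u j * cos (2 * PI * INR k * INR j / 5)) 4.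
Definition vtk (k : nat) (u : C5) : R :=
  sum_f_R0 (fun j => coef u j * sin (2 * PI * INR k * INR j / 5)) 4.
Definition rhok (k : nat) (u : C5) : R := sqrt (vk k u ^ 2 + vtk k u ^ 2).

Definition eplus : C5 := of_fun (fun _ => 1 / 5).
Definition ek (k : nat) : C5 := of_fun (fun j => 2 / 5 * cos (2 * PI * INR k * INR j / 5)).
Definition etk (k : nat) : C5 := of_fun (fun j => 2 / 5 * sin (2 * PI * INR k * INR j / 5)).

Definition cot (x : R) : R := cos x / sin x.

From Stdlib Require Import Reals Lra Lia.
From Coquelicot Require Import Coquelicot.
Open Scope R_scope.

(* The discrete Fourier transform of Z/5 identifies the 5-complex numbers with
   the algebra R x C x C: in the canonical coordinates
   (v_+, v_1 + i vt_1, v_2 + i vt_2) the cyclic product becomes componentwise.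
   Hence exp (et_1 phi_1 + et_2 phi_2) has coordinates (1, e^(i phi_1), e^(i phi_2)),
   and the definitions of the angles together with the Parseval identity
   5 d^2 = v_+^2 + 2 (rho_1^2 + rho_2^2) show that the right-hand side has the
   coordinates (v_+, rho_1 e^(i phi_1), rho_2 e^(i phi_2)) of u.
   All values cos (2 pi m / 5), sin (2 pi m / 5) are polynomials in
   tau = 2 cos (2 pi / 5) and sigma = 2 sin (2 pi / 5), and tau^2 = 1 - tau,
   sigma^2 = 3 + tau, so the algebraic identities are polynomial identities
   modulo these two relations. *)

Definition tau : R := 2 * cos (2 * PI / 5).
Definition sigma : R := 2 * sin (2 * PI / 5).

Lemma tau_lt_2 : tau < 2.
Proof.
  unfold tau; pose proof PI_RGT_0.
  enough (cos (2 * PI / 5) < cos 0) by (rewrite cos_0 in *; lra).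
  apply cos_decreasing_1; lra.
Qed.

Lemma tau_sq : tau ^ 2 = 1 - tau.
Proof.
  set (x := 2 * PI / 5).
  assert (Htriple : cos (x + 2 * x) = cos (2 * PI - 2 * x)) by (f_equal; unfold x; field).
  rewrite cos_plus, cos_minus, cos_2PI, sin_2PI, cos_2a_cos, sin_2a in Htriple.
  pose proof (sin2_cos2 x) as Hpyth; unfold Rsqr in Hpyth.
  replace (sin x * (2 * sin x * cos x)) with (2 * cos x * (1 - cos x * cos x)) in Htriple
    by (rewrite <- Hpyth; ring).
  assert (Hfactor : (tau - 2) * (tau ^ 2 + tau - 1) = 0) by (unfold tau; fold x; lra).
  pose proof tau_lt_2.
  apply Rmult_integral in Hfactor as [Hroot | Hroot]; lra.
Qed.

Lemma sigma_sq : sigma ^ 2 = 3 + tau.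
Proof.
  pose proof tau_sq as Htau; pose proof (sin2_cos2 (2 * PI / 5)) as Hpyth.
  unfold tau, sigma, Rsqr in *; nra.
Qed.

Definition two_cos_fifth (m : nat) : R :=
  match (m mod 5)%nat with 0 => 2 | 1 | 4 => tau | _ => - (1 + tau) end.

Definition two_sin_fifth (m : nat) : R :=
  match (m mod 5)%nat with
  | 0 => 0 | 1 => sigma | 2 => sigma * tau | 3 => - (sigma * tau) | _ => - sigma
  end.

Lemma cos_sin_fifth_small m : (m < 5)%nat ->
  2 * cos (2 * PI * INR m / 5) = two_cos_fifth m /\
  2 * sin (2 * PI * INR m / 5) = two_sin_fifth m.
Proof.
  intro Hm. pose proof tau_sq as Htau. unfold two_cos_fifth, two_sin_fifth.
  destruct m as [|[|[|[|[|m]]]]]; try lia; simpl (_ mod _)%nat; cbv iota.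
  - replace (2 * PI * INR 0 / 5) with 0 by (simpl; field). rewrite cos_0, sin_0; lra.
  - replace (2 * PI * INR 1 / 5) with (2 * PI / 5) by (simpl; field). auto.
  - replace (2 * PI * INR 2 / 5) with (2 * (2 * PI / 5)) by (simpl; field).
    rewrite cos_2a_cos, sin_2a. unfold tau, sigma in *. split; nra.
  - replace (2 * PI * INR 3 / 5) with (2 * PI - 2 * (2 * PI / 5)) by (simpl; field).
    rewrite cos_minus, sin_minus, cos_2PI, sin_2PI, cos_2a_cos, sin_2a.
    unfold tau, sigma in *. split; nra.
  - replace (2 * PI * INR 4 / 5) with (2 * PI - 2 * PI / 5) by (simpl; field).
    rewrite cos_minus, sin_minus, cos_2PI, sin_2PI. unfold tau, sigma. split; ring.
Qed.

Lemma cos_sin_fifth m :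
  2 * cos (2 * PI * INR m / 5) = two_cos_fifth m /\
  2 * sin (2 * PI * INR m / 5) = two_sin_fifth m.
Proof.
  replace (2 * PI * INR m / 5) with (2 * PI * INR (m mod 5) / 5 + 2 * INR (m / 5) * PI).
  2:{ rewrite (Nat.div_mod_eq m 5) at 3. rewrite plus_INR, mult_INR.
      replace (INR 5) with 5 by (simpl; lra). field. }
  rewrite cos_period, sin_period.
  assert (Hsmall := cos_sin_fifth_small (m mod 5) (Nat.mod_upper_bound m 5 ltac:(lia))).
  unfold two_cos_fifth, two_sin_fifth in *. now rewrite Nat.Div0.mod_mod in Hsmall.
Qed.

Lemma cos_fifths k j : cos (2 * PI * INR k * INR j / 5) = two_cos_fifth (k * j) / 2.
Proof. rewrite Rmult_assoc, <- mult_INR, <- (proj1 (cos_sin_fifth _)). field. Qed.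

Lemma sin_fifths k j : sin (2 * PI * INR k * INR j / 5) = two_sin_fifth (k * j) / 2.
Proof. rewrite Rmult_assoc, <- mult_INR, <- (proj2 (cos_sin_fifth _)). field. Qed.

Ltac eval_fifths := unfold two_cos_fifth, two_sin_fifth; simpl (_ mod _)%nat; cbv iota.

Ltac pentagon_field := field_simplify_eq; ring [tau_sq sigma_sq].

(* [canonical p z w] is p e_+ + Re z e_1 + Im z et_1 + Re w e_2 + Im w et_2, i.e. the
   5-complex number with canonical variables v_+ = p, v_1 + i vt_1 = z, v_2 + i vt_2 = w. *)
Definition canonical_coef (p : R) (z w : C) (j : nat) : R :=
  (p + Re z * two_cos_fifth j + Im z * two_sin_fifth j
     + Re w * two_cos_fifth (2 * j) + Im w * two_sin_fifth (2 * j)) / 5.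

Definition canonical (p : R) (z w : C) : C5 := of_fun (canonical_coef p z w).

Ltac expand_canonical :=
  unfold canonical, of_fun; cbn [coef c0 c1 c2 c3 c4];
  unfold canonical_coef; simpl (_ * _)%nat; eval_fifths;
  cbn [Re Im fst snd Cmult RtoC Ci].

Lemma of_fun_ext f g : (forall j, (j <= 4)%nat -> f j = g j) -> of_fun f = of_fun g.
Proof. intro Hfg. unfold of_fun. f_equal; apply Hfg; lia. Qed.

Lemma coef_canonical p z w j :
  (j <= 4)%nat -> coef (canonical p z w) j = canonical_coef p z w j.
Proof. intro Hj. destruct j as [|[|[|[|[|j]]]]]; reflexivity || lia. Qed.

Lemma canonical_ext p z w p' z' w' :
  p = p' -> Re z = Re z' -> Im z = Im z' -> Re w = Re w' -> Im w = Im w' ->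
  canonical p z w = canonical p' z' w'.
Proof. destruct z, w, z', w'; cbn [Re Im fst snd]; intros; subst; reflexivity. Qed.

Lemma canonical_scal a p z w :
  c5scal a (canonical p z w) = canonical (a * p) (a * z)%C (a * w)%C.
Proof.
  destruct z, w. unfold c5scal, canonical, of_fun; cbn [coef c0 c1 c2 c3 c4].
  unfold canonical_coef; cbn [Re Im fst snd Cmult RtoC]. f_equal; field.
Qed.

Lemma canonical_add p z w p' z' w' :
  c5add (canonical p z w) (canonical p' z' w') = canonical (p + p') (z + z')%C (w + w')%C.
Proof.
  destruct z, w, z', w'. unfold c5add, canonical, of_fun; cbn [coef c0 c1 c2 c3 c4].
  unfold canonical_coef; cbn [Re Im fst snd Cplus]. f_equal; field.
Qed.

Lemma canonical_mul p z w p' z' w' :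
  c5mul (canonical p z w) (canonical p' z' w') = canonical (p * p') (z * z')%C (w * w')%C.
Proof.
  destruct z, w, z', w'.
  unfold c5mul, canonical, of_fun; cbn [sum_f_R0]; simpl (_ mod _)%nat.
  cbn [coef c0 c1 c2 c3 c4].
  unfold canonical_coef; simpl (2 * _)%nat; eval_fifths; cbn [Re Im fst snd Cmult].
  f_equal; pentagon_field.
Qed.

Lemma c5one_canonical : c5one = canonical 1 1 1.
Proof. unfold c5one. expand_canonical. f_equal; pentagon_field. Qed.

Lemma canonical_pow p z w n :
  c5pow (canonical p z w) n = canonical (p ^ n) (z ^ n)%C (w ^ n)%C.
Proof.
  induction n as [|n IHn]; cbn [c5pow pow Cpow].
  - exact c5one_canonical.
  - now rewrite IHn, canonical_mul.
Qed.

Lemma eplus_canonical : eplus = canonical 1 0 0.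
Proof. unfold eplus. expand_canonical. f_equal; field. Qed.

Lemma ek1_canonical : ek 1 = canonical 0 1 0.
Proof. unfold ek, of_fun at 1. rewrite !cos_fifths. expand_canonical. f_equal; field. Qed.

Lemma ek2_canonical : ek 2 = canonical 0 0 1.
Proof. unfold ek, of_fun at 1. rewrite !cos_fifths. expand_canonical. f_equal; field. Qed.

Lemma etk1_canonical : etk 1 = canonical 0 Ci 0.
Proof. unfold etk, of_fun at 1. rewrite !sin_fifths. expand_canonical. f_equal; field. Qed.

Lemma etk2_canonical : etk 2 = canonical 0 0 Ci.
Proof. unfold etk, of_fun at 1. rewrite !sin_fifths. expand_canonical. f_equal; field. Qed.

Lemma canonical_coordinates u :
  u = canonical (vplus u) (vk 1 u, vtk 1 u) (vk 2 u, vtk 2 u).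
Proof.
  destruct u. unfold vplus, vk, vtk; cbn [sum_f_R0 coef].
  rewrite !cos_fifths, !sin_fifths. expand_canonical. f_equal; pentagon_field.
Qed.

Lemma modulus_sq u :
  5 * modulus u ^ 2 = vplus u ^ 2 + 2 * (rhok 1 u ^ 2 + rhok 2 u ^ 2).
Proof.
  unfold modulus, rhok. rewrite !pow2_sqrt by (cbn [sum_f_R0]; nra).
  destruct u. unfold vplus, vk, vtk; cbn [sum_f_R0 coef].
  rewrite !cos_fifths, !sin_fifths. simpl (_ * _)%nat. eval_fifths. pentagon_field.
Qed.

Lemma is_series_ext_R (a b : nat -> R) l :
  (forall n, a n = b n) -> is_series a l -> is_series b l.
Proof. apply is_series_ext. Qed.

Lemma is_series_zero : is_series (fun _ : nat => 0) 0.
Proof.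
  apply is_series_Reals. intros eps Heps. exists 0%nat. intros n _.
  rewrite sum_cte, Rmult_0_l, R_dist_eq. exact Heps.
Qed.

Lemma Ci_pow_even n : (Ci ^ (2 * n))%C = RtoC ((-1) ^ n).
Proof.
  rewrite Cpow_mult_r, RtoC_pow. f_equal.
  apply injective_projections; simpl; lra.
Qed.

Lemma Ci_pow_odd n : (Ci ^ (2 * n + 1))%C = (RtoC ((-1) ^ n)%R * Ci)%C.
Proof. now rewrite Cpow_add_r, Ci_pow_even, Cpow_1_r. Qed.

Lemma is_pseries_cos (x : R) :
  is_pseries (fun n => Re (Ci ^ n)%C / INR (Factorial.fact n)) x (cos x).
Proof.
  replace (cos x) with (cos x + x * 0) by ring.
  apply is_pseries_odd_even; apply is_pseries_R.
  - unfold cos. destruct (exist_cos (Rsqr x)) as [l Hl].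
    eapply is_series_ext_R; [| apply is_series_Reals; exact Hl].
    intro n. rewrite Ci_pow_even. unfold cos_n, Rsqr; cbn [Re RtoC fst].
    now replace (x * x) with (x ^ 2) by ring.
  - eapply is_series_ext_R; [| exact is_series_zero].
    intro n. rewrite Ci_pow_odd. cbn [Re Im RtoC Ci Cmult fst snd]. unfold Rdiv; ring.
Qed.

Lemma is_pseries_sin (x : R) :
  is_pseries (fun n => Im (Ci ^ n)%C / INR (Factorial.fact n)) x (sin x).
Proof.
  unfold sin. destruct (exist_sin (Rsqr x)) as [l Hl].
  replace (x * l) with (0 + x * l) by ring.
  apply is_pseries_odd_even; apply is_pseries_R.
  - eapply is_series_ext_R; [| exact is_series_zero].
    intro n. rewrite Ci_pow_even. cbn [Im RtoC snd]. unfold Rdiv; ring.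
  - eapply is_series_ext_R; [| apply is_series_Reals; exact Hl].
    intro n. rewrite Ci_pow_odd. unfold sin_n, Rsqr; cbn [Re Im RtoC Ci Cmult fst snd].
    replace (x * x) with (x ^ 2) by ring. unfold Rdiv; ring.
Qed.

Lemma is_series_exp x : is_series (fun n => x ^ n / INR (Factorial.fact n)) (exp x).
Proof.
  apply (is_series_ext_R (fun n => / INR (Factorial.fact n) * x ^ n)).
  - intro n. unfold Rdiv; ring.
  - apply is_pseries_R, is_exp_Reals.
Qed.

Lemma is_series_cos_imag (x : R) :
  is_series (fun n => Re ((x * Ci) ^ n)%C / INR (Factorial.fact n)) (cos x).
Proof.
  apply (is_series_ext_R (fun n => Re (Ci ^ n)%C / INR (Factorial.fact n) * x ^ n)).
  - intro n. rewrite Cpow_mult_l, <- RtoC_pow.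
    unfold Re, Im, Cmult, RtoC; cbn [fst snd]. unfold Rdiv; ring.
  - apply is_pseries_R, is_pseries_cos.
Qed.

Lemma is_series_sin_imag (x : R) :
  is_series (fun n => Im ((x * Ci) ^ n)%C / INR (Factorial.fact n)) (sin x).
Proof.
  apply (is_series_ext_R (fun n => Im (Ci ^ n)%C / INR (Factorial.fact n) * x ^ n)).
  - intro n. rewrite Cpow_mult_l, <- RtoC_pow.
    unfold Re, Im, Cmult, RtoC; cbn [fst snd]. unfold Rdiv; ring.
  - apply is_pseries_R, is_pseries_sin.
Qed.

Lemma is_series_canonical_coef (d p : nat -> R) (z w : nat -> C) P Z W j :
  is_series (fun n => p n / d n) P ->
  is_series (fun n => Re (z n) / d n) (Re Z) -> is_series (fun n => Im (z n) / d n) (Im Z) ->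
  is_series (fun n => Re (w n) / d n) (Re W) -> is_series (fun n => Im (w n) / d n) (Im W) ->
  is_series (fun n => canonical_coef (p n) (z n) (w n) j / d n) (canonical_coef P Z W j).
Proof.
  intros Hp Hzr Hzi Hwr Hwi.
  pose proof (is_series_scal_r (/ 5) _ _
    (is_series_plus _ _ _ _
      (is_series_plus _ _ _ _
        (is_series_plus _ _ _ _
          (is_series_plus _ _ _ _ Hp (is_series_scal_r (two_cos_fifth j) _ _ Hzr))
          (is_series_scal_r (two_sin_fifth j) _ _ Hzi))
        (is_series_scal_r (two_cos_fifth (2 * j)) _ _ Hwr))
      (is_series_scal_r (two_sin_fifth (2 * j)) _ _ Hwi))) as Hsum.
  eapply is_series_ext_R; [| exact Hsum].
  intro n. unfold canonical_coef, plus; simpl. unfold Rdiv; ring.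
Qed.

Lemma c5exp_canonical (p phi1 phi2 : R) :
  c5exp (canonical p (phi1 * Ci)%C (phi2 * Ci)%C)
  = canonical (exp p) (cos phi1, sin phi1) (cos phi2, sin phi2).
Proof.
  unfold c5exp. apply of_fun_ext. intros j Hj. apply is_series_unique.
  apply (is_series_ext_R
           (fun n => canonical_coef (p ^ n) ((phi1 * Ci) ^ n) ((phi2 * Ci) ^ n) j
                     / INR (Factorial.fact n))).
  { intro n. now rewrite canonical_pow, coef_canonical. }
  apply is_series_canonical_coef;
    apply is_series_exp || apply is_series_cos_imag || apply is_series_sin_imag.
Qed.

Lemma c5exp_imaginary phi1 phi2 :
  c5exp (c5add (c5scal phi1 (etk 1)) (c5scal phi2 (etk 2)))
  = canonical 1 (cos phi1, sin phi1) (cos phi2, sin phi2).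
Proof.
  rewrite etk1_canonical, etk2_canonical, !canonical_scal, canonical_add,
    <- exp_0, <- c5exp_canonical.
  f_equal. apply canonical_ext; cbn; ring.
Qed.

Lemma cot_eq_div x a b : 0 <= x <= PI -> 0 < b -> sin x * a = b * cos x -> cot x = a / b.
Proof.
  intros Hx Hb Htan.
  assert (Hsin : 0 < sin x).
  { destruct (Rle_lt_or_eq_dec _ _ (sin_ge_0 x (proj1 Hx) (proj2 Hx))) as [Hpos | Hzero];
      [exact Hpos | exfalso].
    pose proof (sin2_cos2 x) as Hpyth. rewrite <- Hzero in Htan, Hpyth. unfold Rsqr in Hpyth.
    nra. }
  unfold cot. field_simplify_eq; lra.
Qed.

Lemma polar_amplitude_eq d v r1 r2 :
  0 < r1 -> 0 <= d -> 5 * d ^ 2 = v ^ 2 + 2 * (r1 ^ 2 + r2 ^ 2) ->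
  d * sqrt (5 / 2) / sqrt ((v / (sqrt 2 * r1)) ^ 2 + 1 + (r2 / r1) ^ 2) = r1.
Proof.
  intros Hr1 Hd Hnorm.
  assert (Hs2 : sqrt 2 ^ 2 = 2) by (apply pow2_sqrt; lra).
  assert (Hs52 : sqrt (5 / 2) ^ 2 = 5 / 2) by (apply pow2_sqrt; lra).
  assert (Hs2pos : 0 < sqrt 2) by (apply sqrt_lt_R0; lra).
  assert (Hs52pos : 0 < sqrt (5 / 2)) by (apply sqrt_lt_R0; lra).
  assert (Hdpos : 0 < d) by nra.
  replace ((v / (sqrt 2 * r1)) ^ 2 + 1 + (r2 / r1) ^ 2) with ((sqrt (5 / 2) * d / r1) ^ 2).
  - rewrite sqrt_pow2.
    + field. lra.
    + apply Rlt_le, Rdiv_lt_0_compat; nra.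
  - field_simplify_eq; [| lra].
    rewrite Hs2, Hs52. nra.
Qed.

Theorem mainTheorem7 (u : C5) (phi1 phi2 thetap psi1 : R)
  (hrho1 : 0 < rhok 1 u)
  (* phi_k in [0, 2 pi) with cos phi_k = v_k / rho_k, sin phi_k = vt_k / rho_k *)
  (hphi1 : 0 <= phi1 < 2 * PI)
  (hphi1c : rhok 1 u * cos phi1 = vk 1 u) (hphi1s : rhok 1 u * sin phi1 = vtk 1 u)
  (hphi2 : 0 <= phi2 < 2 * PI)
  (hphi2c : rhok 2 u * cos phi2 = vk 2 u) (hphi2s : rhok 2 u * sin phi2 = vtk 2 u)
  (* theta_+ in [0, pi] with tan theta_+ = sqrt 2 rho_1 / v_+ *)
  (htheta : 0 <= thetap <= PI)
  (hthetat : sin thetap * vplus u = sqrt 2 * rhok 1 u * cos thetap)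
  (* psi_1 in [0, pi/2] with tan psi_1 = rho_1 / rho_2 *)
  (hpsi : 0 <= psi1 <= PI / 2)
  (hpsit : sin psi1 * rhok 2 u = rhok 1 u * cos psi1) :
  u = c5mul
        (c5scal (modulus u * sqrt (5 / 2)
                 / sqrt (cot thetap ^ 2 + 1 + cot psi1 ^ 2))
           (c5add (c5scal (sqrt 2 * cot thetap) eplus)
                  (c5add (ek 1) (c5scal (cot psi1) (ek 2)))))
        (c5exp (c5add (c5scal phi1 (etk 1)) (c5scal phi2 (etk 2)))).
Proof.
  assert (Hs2 : 0 < sqrt 2) by (apply sqrt_lt_R0; lra).
  rewrite (cot_eq_div thetap (vplus u) (sqrt 2 * rhok 1 u)) by (auto; nra).
  rewrite (cot_eq_div psi1 (rhok 2 u) (rhok 1 u)) by (auto; pose proof PI_RGT_0; lra).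
  rewrite polar_amplitude_eq; [| exact hrho1 | apply sqrt_pos | apply modulus_sq].
  rewrite c5exp_imaginary, eplus_canonical, ek1_canonical, ek2_canonical,
    !canonical_scal, !canonical_add, canonical_scal, canonical_mul.
  rewrite (canonical_coordinates u) at 1.
  rewrite <- hphi1c, <- hphi1s, <- hphi2c, <- hphi2s.
  apply canonical_ext; unfold Re, Im, Cmult, Cplus, RtoC, Ci; cbn [fst snd].
  all: field; split; lra.
Qed.
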